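(* Let $A$ be a finite alphabet. If $u_1$ is $\ell_1$-rich and $u_2$ is $\ell_2$-rich, then for all $v,v'\in A^*$, $v\sim_n v'$ implies $u_1vu_2\sim_{\ell_1+n+\ell_2}u_1v'u_2$.
   Context: A word $u\in A^*$ is rich if every letter of $A$ occurs in it. For $\ell\in\mathbb{N}$, $u$ is $\ell$-rich if it can be written $u=u_1\cdots u_\ell u'$ where $u_1,\ldots,u_\ell$ are rich. $u\sim_n v$ iff $u$ and $v$ have exactly the same (scattered) subwords of length at most $n$. *)

From mathcomp Require Import all_boot.
Set Implicit Arguments. Unset Strict Implicit. Unset Printing Implicit Defensive.

Definition rich (A : finType) (u : seq A) : Prop := forall a : A, a \in u.

Definition lrich (A : finType) (l : nat) (u : seq A) : Prop :=
  exists (us : seq (seq A)) (u' : seq A),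
    size us = l /\ (forall x, x \in us -> rich x) /\ u = flatten us ++ u'.

Definition simn (A : finType) (n : nat) (u v : seq A) : Prop :=
  forall w : seq A, size w <= n -> subseq w u = subseq w v.

From mathcomp Require Import all_boot.

(* A subword [w] of [p ++ x] is found by embedding a longest possible prefix of
   [w] greedily into [p] and the remaining suffix into [x].  Each rich block
   of [p] absorbs at least one letter of [w], so behind an [l]-rich prefix only
   a suffix of length at most [size w - l] is left to be found in [x], where
   [~_n] controls it.  The right factor is handled by reversing words. *)

Set Implicit Arguments.
Unset Strict Implicit.
Unset Printing Implicit Defensive.

Section GreedyEmbedding.
Variable T : eqType.

Fixpoint greedy_rest (p w : seq T) : seq T :=
  match p, w with
  | c :: p', a :: w' => greedy_rest p' (if a == c then w' else w)
  | _, _ => w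
  end.

Lemma subseq_cat_greedy_rest (p x w : seq T) :
  subseq w (p ++ x) = subseq (greedy_rest p w) x.
Proof. by elim: p w => [|c p IHp] [|a w] //=; rewrite ?sub0seq. Qed.

Lemma greedy_rest_cat (p q w : seq T) :
  greedy_rest (p ++ q) w = greedy_rest q (greedy_rest p w).
Proof. by elim: p w => [|c p IHp] [|a w] //=; case: q IHp. Qed.

Lemma size_greedy_rest (p w : seq T) : size (greedy_rest p w) <= size w.
Proof.
elim: p w => [|c p IHp] [|a w] //=.
by case: eqP => _ //; apply: leq_trans (IHp w) (leqnSn _).
Qed.

End GreedyEmbedding.

Section RichFactors.
Variable A : finType.

Lemma size_greedy_rest_rich (r w : seq A) :
  rich r -> size (greedy_rest r w) <= (size w).-1.
Proof.
case: w => [|a w] r_rich; first by case: r {r_rich}.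
have: a \in r by [].
elim: r {r_rich} => [|c r IHr] //=; rewrite inE.
by case: eqP => [->|_] //= _; rewrite size_greedy_rest.
Qed.

Lemma size_greedy_rest_lrich l (u w : seq A) :
  lrich l u -> size (greedy_rest u w) <= size w - l.
Proof.
case=> us [u' [<- [us_rich ->]]].
rewrite greedy_rest_cat; apply: leq_trans (size_greedy_rest _ _) _.
elim: us w us_rich => [|r us IHus] w us_rich /=; first by rewrite subn0.
have r_rich : rich r by apply: us_rich; rewrite mem_head.
have {}IHus : size (greedy_rest (flatten us) (greedy_rest r w))
               <= size (greedy_rest r w) - size us.
  by apply: IHus => s s_us; apply: us_rich; rewrite inE s_us orbT.
rewrite greedy_rest_cat; apply: leq_trans IHus _.
by rewrite subnS -subn1 subnAC subn1 leq_sub2r ?size_greedy_rest_rich.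
Qed.

Lemma lrich_rev l (u : seq A) :
  lrich l u -> exists s t, rev u = s ++ t /\ lrich l t.
Proof.
case=> us [u' [size_us [us_rich ->]]].
exists (rev u'), (flatten (rev (map rev us))); split.
  by rewrite rev_cat rev_flatten.
exists (rev (map rev us)), [::]; rewrite cats0 size_rev size_map; split => //.
by split=> // r; rewrite mem_rev => /mapP [s s_us ->] a; rewrite mem_rev us_rich.
Qed.

Lemma simn_catl n (p x y : seq A) : simn n x y -> simn n (p ++ x) (p ++ y).
Proof.
move=> xy w size_w; rewrite !subseq_cat_greedy_rest; apply: xy.
exact: leq_trans (size_greedy_rest _ _) size_w.
Qed.

Lemma simn_rev n (x y : seq A) : simn n x y -> simn n (rev x) (rev y).
Proof.
by move=> xy w size_w; rewrite -(revK w) !subseq_rev xy ?size_rev.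
Qed.

Lemma simn_lrich_catl l n (u x y : seq A) :
  lrich l u -> simn n x y -> simn (l + n) (u ++ x) (u ++ y).
Proof.
move=> u_rich xy w size_w; rewrite !subseq_cat_greedy_rest; apply: xy.
by apply: leq_trans (size_greedy_rest_lrich w u_rich) _; rewrite leq_subLR.
Qed.

Lemma simn_lrich_catr l n (u x y : seq A) :
  lrich l u -> simn n x y -> simn (n + l) (x ++ u) (y ++ u).
Proof.
move=> /lrich_rev [s [t [rev_u t_rich]]] xy.
rewrite -(revK (x ++ u)) -(revK (y ++ u)); apply: simn_rev.
rewrite !rev_cat rev_u -!catA addnC; apply: simn_catl.
exact: simn_lrich_catl (simn_rev xy).
Qed.

End RichFactors.

Theorem lemma4 (A : finType) (l1 l2 n : nat) (u1 u2 : seq A) :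
  lrich l1 u1 -> lrich l2 u2 ->
  forall v v' : seq A, simn n v v' ->
    simn (l1 + n + l2) (u1 ++ v ++ u2) (u1 ++ v' ++ u2).
Proof.
move=> u1_rich u2_rich v v' vv'; rewrite -addnA.
exact: simn_lrich_catl u1_rich (simn_lrich_catr u2_rich vv').
Qed.
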